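(* Let $\gamma\in\Gamma$, $n'\in\mathbb{N}_+$ and $v_1,v_2\in V$. If $v_1\preceq v_2$ and $\|v_1\|_1<\|v_2\|_1$, then $\|\varphi^{(\gamma)}_{n'}(v_1)\|_1<\|\varphi^{(\gamma)}_{n'}(v_2)\|_1$.
   Context: $\sigma(x)=\max(0,x)$; $\mathrm{RL}(n,n')$ ($n,n'\in\mathbb{N}_+$) is the set of maps $h:\mathbb{R}^n\to\mathbb{R}^{n'}$, $h(x)_i=\sigma(\langle x,w_i\rangle+b_i)$ for some $W\in\mathbb{R}^{n'\times n}$ with rows $w_i$, $b\in\mathbb{R}^{n'}$; convention: $\mathrm{RL}(0,n')$ are constant maps $\{0\}\to\mathbb{R}^{n'}$ with $\mathcal{H}_{n'}(\mathcal{S}_h)={\rm e}_0$. $S_h(x)_i=1$ iff $\langle x,w_i\rangle+b_i>0$ else $0$; $\mathcal{S}_h=\{S_h(x)\}$; $|s|=\sum_is_i$. $V$: sequences $(v_j)_{j\in\mathbb{N}}$ of nonnegative integers with finite sum, $\|v\|_1=\sum_jv_j$; ${\rm e}_i$ has $({\rm e}_i)_j=\delta_{ij}$; $v\preceq w$ iff $\sum_{j\ge J}v_j\le\sum_{j\ge J}w_j$ for all $J\in\mathbb{N}$; for finite families, $\max_i(v^{(i)})_J=\max_i\sum_{j\ge J}v^{(i)}_j-\max_i\sum_{j\ge J+1}v^{(i)}_j$. $\mathcal{H}_{n'}(\mathcal{S})=(|\{s\in\mathcal{S}:|s|=j\}|)_j$. $\Gamma$: families $(\gamma_{n,n'})_{n'\in\mathbb{N}_+,n\in\{0,\dots,n'\}}$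 in $V$ with (i) $\max\{\mathcal{H}_{n'}(\mathcal{S}_h):h\in\mathrm{RL}(n,n')\}\preceq\gamma_{n,n'}$, (ii) $n\le\tilde n\le n'\Rightarrow\gamma_{n,n'}\preceq\gamma_{\tilde n,n'}$. $\mathrm{cl}_{i^*}(v)_i=v_i$ ($i<i^*$), $\sum_{j\ge i^*}v_j$ ($i=i^*$), $0$ ($i>i^*$). $\varphi^{(\gamma)}_{n'}(v)=\sum_{n=0}^\infty v_n\,\mathrm{cl}_{\min(n,n')}(\gamma_{\min(n,n'),n'})$. *)

From HB Require Import structures.
From mathcomp Require Import all_boot all_order all_algebra.
From mathcomp Require Import boolp.
From mathcomp Require Import Rstruct.
From Stdlib Require Rdefinitions.
Local Notation R := Rdefinitions.R.

Set Implicit Arguments. Unset Strict Implicit. Unset Printing Implicit Defensive.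
Import Order.TTheory GRing.Theory Num.Theory.

(* ---------- The space V of finitely supported nat sequences ----------
   An element v of V is represented by a finite list v : seq nat, with
   v_j := nth 0 v j (so v_j = 0 for j >= size v). *)

Definition vcoef (v : seq nat) (j : nat) : nat := nth 0 v j.

Definition norm1 (v : seq nat) : nat := sumn v.

Definition tail (v : seq nat) (J : nat) : nat := sumn (drop J v).

Definition vprec (v w : seq nat) : Prop := forall J : nat, tail v J <= tail w J.

Definition evec (i : nat) : seq nat := rcons (nseq i 0) 1.

Definition vadd (v w : seq nat) : seq nat :=
  mkseq (fun j => vcoef v j + vcoef w j) (maxn (size v) (size w)).
Definition vscale (k : nat) (v : seq nat) : seq nat := map (muln k) v.

Definition vmax (l : seq (seq nat)) : seq nat :=
  mkseq (fun J => \max_(v <- l) tail v J - \max_(v <- l) tail v J.+1)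
        (\max_(v <- l) size v).

Definition cl (istar : nat) (v : seq nat) : seq nat :=
  mkseq (fun i => if i < istar then vcoef v i
                  else if i == istar then tail v istar else 0) istar.+1.

(* A layer h in RL(n,n') (n >= 1) is given by weights W (rows w_i) and bias b.
   S_h(x)_i = 1 iff <x,w_i> + b_i > 0. *)
Definition pattern (n n' : nat) (W : 'I_n' -> 'I_n -> R) (b : 'I_n' -> R)
  (x : 'I_n -> R) : {ffun 'I_n' -> bool} :=
  [ffun i => (0 < (\sum_(k < n) x k * W i k)%R + b i)%R].

Definition patset (n n' : nat) (W : 'I_n' -> 'I_n -> R) (b : 'I_n' -> R)
  : {set {ffun 'I_n' -> bool}} :=
  [set s | `[< exists x : 'I_n -> R, pattern W b x = s >] ].

Definition psize (n' : nat) (s : {ffun 'I_n' -> bool}) : nat :=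
  \sum_(i < n') (s i : nat).

Definition hist (n' : nat) (P : {set {ffun 'I_n' -> bool}}) : seq nat :=
  mkseq (fun j => #|[set s in P | psize s == j]|) n'.+1.

Definition achS (n n' : nat) : {set {set {ffun 'I_n' -> bool}}} :=
  [set P | `[< exists (W : 'I_n' -> 'I_n -> R) (b : 'I_n' -> R), patset W b = P >] ].

(* The family { H_{n'}(S_h) : h in RL(n,n') }, with the convention that for
   n = 0 (constant maps) H_{n'}(S_h) = e_0. *)
Definition hists (n n' : nat) : seq (seq nat) :=
  if n == 0 then [:: evec 0] else [seq hist P | P <- enum (achS n n')].

(* ---------- The class Gamma ----------
   gamma n n' stands for gamma_{n,n'}; only n' >= 1, n <= n' matter. *)
Definition InGamma (gamma : nat -> nat -> seq nat) : Prop :=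
  (forall n' n : nat, 0 < n' -> n <= n' -> vprec (vmax (hists n n')) (gamma n n'))
  /\ (forall n' n nt : nat, 0 < n' -> n <= nt -> nt <= n' ->
        vprec (gamma n n') (gamma nt n')).

Definition phi (gamma : nat -> nat -> seq nat) (n' : nat) (v : seq nat) : seq nat :=
  foldr vadd [::]
    [seq vscale (vcoef v n) (cl (minn n n') (gamma (minn n n') n')) | n <- iota 0 (size v)].

(* Write c_n for the 1-norm of gamma_{min(n,n'),n'}. Since cl_i preserves the
   1-norm, ||phi(v)||_1 is the weighted sum sum_n v_n c_n. Property (ii) of Gamma
   makes c nondecreasing, and property (i) for n = 0, where the only histogram is
   e_0, gives c_0 >= 1. By Abel summation,
     sum_n v_n c_n = c_0 ||v||_1 + sum_{J >= 1} (c_J - c_{J-1}) sum_{j >= J} v_j,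
   so v1 ⪯ v2 yields sum_n (v2_n - v1_n) c_n >= c_0 (||v2||_1 - ||v1||_1) > 0. *)

From mathcomp Require Import all_boot.
From mathcomp Require Import zify.

Set Implicit Arguments.
Unset Strict Implicit.
Unset Printing Implicit Defensive.

Lemma sumn_mkseq (f : nat -> nat) m : sumn (mkseq f m) = \sum_(j < m) f j.
Proof. by rewrite sumnE /mkseq big_map -(big_mkord xpredT) /index_iota subn0. Qed.

Lemma sum_ord_nth (s : seq nat) m : size s <= m -> \sum_(j < m) nth 0 s j = sumn s.
Proof.
elim: s m => [|x s IHs] m le_sm; first by rewrite big1 // => j; rewrite nth_nil.
by case: m le_sm => // m le_sm; rewrite big_ord_recl /= IHs.
Qed.

Lemma norm1_vadd v w : norm1 (vadd v w) = norm1 v + norm1 w.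
Proof.
rewrite /norm1 sumn_mkseq big_split /=.
by rewrite !sum_ord_nth // ?leq_maxl ?leq_maxr.
Qed.

Lemma norm1_vscale k v : norm1 (vscale k v) = k * norm1 v.
Proof. by elim: v => [|x v IHv]; rewrite /norm1 /= ?muln0 // mulnDr -IHv. Qed.

Lemma norm1_cl i v : norm1 (cl i v) = norm1 v.
Proof.
rewrite /norm1 -[in RHS](cat_take_drop i v) sumn_cat -(@sum_ord_nth (take i v) i); last first.
  by rewrite size_take_min geq_minl.
rewrite /cl sumn_mkseq big_ord_recr /= ltnn eqxx; congr (_ + _).
by apply: eq_bigr => j _; rewrite ltn_ord nth_take.
Qed.

Lemma norm1_foldr_vadd (vs : seq (seq nat)) :
  norm1 (foldr vadd [::] vs) = sumn (map norm1 vs).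
Proof. by elim: vs => [|v vs IHvs] //=; rewrite norm1_vadd IHvs. Qed.

Definition weighted_sum (c : nat -> nat) (v : seq nat) : nat :=
  \sum_(n <- iota 0 (size v)) vcoef v n * c n.

Lemma weighted_sum_nil c : weighted_sum c [::] = 0.
Proof. by rewrite /weighted_sum big_nil. Qed.

Lemma weighted_sum_cons c x v :
  weighted_sum c (x :: v) = x * c 0 + weighted_sum (fun n => c n.+1) v.
Proof. by rewrite /weighted_sum /= big_cons -[1]addn0 iotaDl big_map. Qed.

Lemma weighted_sum_ge c v : {homo c : m n / m <= n} -> c 0 * norm1 v <= weighted_sum c v.
Proof.
elim: v c => [|x v IHv] c c_homo; first by rewrite weighted_sum_nil muln0.
rewrite weighted_sum_cons /norm1 /= mulnDr mulnC leq_add2l.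
apply: leq_trans (IHv (fun n => c n.+1) (fun m n le_mn => c_homo m.+1 n.+1 le_mn)).
by rewrite leq_mul2r c_homo ?orbT.
Qed.

Lemma weighted_sum_norm1_eq0 c v : norm1 v = 0 -> weighted_sum c v = 0.
Proof.
elim: v c => [|x v IHv] c; first by rewrite weighted_sum_nil.
by rewrite /norm1 /= weighted_sum_cons => /eqP; rewrite addn_eq0 => /andP[/eqP-> /eqP/IHv->].
Qed.

Lemma vprec_cons x v y w : vprec (x :: v) (y :: w) -> vprec v w.
Proof. by move=> prec J; apply: (prec J.+1). Qed.

Lemma vprec_norm1 v w : vprec v w -> norm1 v <= norm1 w.
Proof. by move/(_ 0); rewrite /tail !drop0. Qed.

Lemma weighted_sum_vprec c v w : {homo c : m n / m <= n} -> vprec v w ->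
  weighted_sum c v + c 0 * (norm1 w - norm1 v) <= weighted_sum c w.
Proof.
elim: v c w => [|x v IHv] c w c_homo prec_vw.
  by rewrite weighted_sum_nil add0n subn0 weighted_sum_ge.
have le_norm := vprec_norm1 prec_vw.
case: w prec_vw le_norm => [|y w] prec_vw le_norm.
  by rewrite weighted_sum_norm1_eq0 ?muln0 //; apply/eqP; rewrite -leqn0.
have prec_tail := vprec_cons prec_vw.
have c_homo' : {homo (fun n => c n.+1) : m n / m <= n} by move=> m n le_mn; apply: c_homo.
have IH := IHv _ w c_homo' prec_tail.
have le_tail := vprec_norm1 prec_tail.
have : c 0 * (norm1 w - norm1 v) <= c 1 * (norm1 w - norm1 v).
  by rewrite leq_mul2r c_homo ?orbT.
move: le_norm IH; rewrite !weighted_sum_cons /norm1 /=; nia.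
Qed.

Lemma norm1_vmax_hists0 n' : norm1 (vmax (hists 0 n')) = 1.
Proof. by rewrite /vmax /hists /= big_seq1 /= !big_seq1. Qed.

Definition gamma_weight (gamma : nat -> nat -> seq nat) (n' n : nat) : nat :=
  norm1 (gamma (minn n n') n').

Lemma norm1_phi gamma n' v :
  norm1 (phi gamma n' v) = weighted_sum (gamma_weight gamma n') v.
Proof.
rewrite /phi norm1_foldr_vadd -map_comp sumnE big_map.
by apply: eq_bigr => n _; rewrite /comp norm1_vscale norm1_cl.
Qed.

Section GammaWeights.

Variables (gamma : nat -> nat -> seq nat) (n' : nat).
Hypotheses (gammaP : InGamma gamma) (n'_gt0 : 0 < n').

Lemma gamma_weight_homo : {homo gamma_weight gamma n' : m n / m <= n}.
Proof.
move=> m n le_mn; apply: vprec_norm1; apply: gammaP.2 => //; last exact: geq_minr.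
by rewrite leq_min geq_minr (leq_trans (geq_minl _ _)).
Qed.

Lemma gamma_weight0_gt0 : 0 < gamma_weight gamma n' 0.
Proof.
rewrite /gamma_weight min0n -(norm1_vmax_hists0 n').
by apply/vprec_norm1/gammaP.1.
Qed.

End GammaWeights.

Theorem mainTheorem6 (gamma : nat -> nat -> seq nat) (n' : nat) (v1 v2 : seq nat) :
  InGamma gamma -> 0 < n' ->
  vprec v1 v2 -> norm1 v1 < norm1 v2 ->
  norm1 (phi gamma n' v1) < norm1 (phi gamma n' v2).
Proof.
move=> gammaP n'_gt0 prec12 lt12; rewrite !norm1_phi.
have := weighted_sum_vprec (gamma_weight_homo gammaP n'_gt0) prec12.
have : 0 < gamma_weight gamma n' 0 * (norm1 v2 - norm1 v1).
  by rewrite muln_gt0 gamma_weight0_gt0 // subn_gt0.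
lia.
Qed.
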